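(* Let $G$ be a finite simple graph, $P$ a pebble distribution, and $U$ a unit distribution of nonzero size on a vertex $u$, disjoint from $P$. If a vertex $v$ has cooperation excess at least $3$ and one of its neighbors is a cooperation vertex, then there is a vertex $w$ adjacent to $v$ with $M(w)\leq M(v)$.
   Context: A pebble distribution is a function $V(G)\to\mathbb{Z}_{\geq0}$; $(P+U)(v)=P(v)+U(v)$. A pebbling move removes two pebbles from a vertex and adds one to an adjacent vertex; a pebbling sequence is an executable sequence of moves, and $(P+U)_\sigma$ is the result of applying $\sigma$. A vertex $v$ is $k$-reachable under a distribution if some pebbling sequence yields at least $k$ pebbles on $v$; reachable means $1$-reachable. $\mathrm{reach}(P,v)$ is the largest such $k$; $\mathrm{exc}(P,v)=\mathrm{reach}(P,v)-1$ if $v$ is reachable, else $0$. A cooperation vertex is reachable under $P+U$ but under neither $P$ nor $U$. The cooperation excess of $v$ is $\mathrm{exc}(P+U,v)-\mathrm{exc}(P,v)-\mathrm{exc}(U,v)$. A vertex is utilized by a pebbling sequence if some move of it removes or adds a pebble at that vertex. $M(v)$ is the minimum, over pebbling sequences $\sigma$ from $P+U$ with $(P+U)_\sigma(v)\geq 2$, of the number of cooperation vertices utilized by $\sigma$ (counting $v$ if it is a cooperation vertex); $M(v)=\infty$ if $v$ is not $2$-reachable under $P+U$. *)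

From mathcomp Require Import all_boot.
From mathcomp Require Import ssralg ssrint.
From Stdlib Require Import ClassicalEpsilon ClassicalDescription.

Set Implicit Arguments.
Unset Strict Implicit.
Unset Printing Implicit Defensive.

Section Pebbling.
Variable T : finType.
Variable e : rel T.

Definition dist := T -> nat.

Definition dadd (P U : dist) : dist := fun x => P x + U x.

Definition move (D : dist) (m : T * T) : option dist :=
  let: (x, y) := m in
  if e x y && (2 <= D x) then
    Some (fun z => (if z == x then D z - 2 else D z) + (if z == y then 1 else 0))
  else None.

Fixpoint run (D : dist) (s : seq (T * T)) : option dist :=
  match s with
  | [::] => Some D
  | m :: s' => match move D m with
               | Some D' => run D' s'
               | None => None
               end
  end.

Definition kreach (D : dist) (v : T) (k : nat) : Prop :=
  exists s D', run D s = Some D' /\ k <= D' v.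

Definition reachable (D : dist) (v : T) : Prop := kreach D v 1.

Definition reach (D : dist) (v : T) : nat :=
  epsilon (inhabits 0%N)
    (fun k => kreach D v k /\ forall j, kreach D v j -> j <= k).

Definition exc (D : dist) (v : T) : nat :=
  if excluded_middle_informative (reachable D v) then (reach D v).-1 else 0.

Definition coop (P U : dist) (x : T) : Prop :=
  reachable (dadd P U) x /\ ~ reachable P x /\ ~ reachable U x.

Definition coop_excess (P U : dist) (v : T) : int :=
  ((exc (dadd P U) v)%:Z - (exc P v)%:Z - (exc U v)%:Z)%R.

Definition utilized (s : seq (T * T)) (x : T) : Prop :=
  exists2 m, m \in s & (m.1 = x \/ m.2 = x).

Definition coop_b (P U : dist) (x : T) : bool :=
  if excluded_middle_informative (coop P U x) then true else false.

Definition utilized_b (s : seq (T * T)) (x : T) : bool :=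
  has (fun m : T * T => (m.1 == x) || (m.2 == x)) s.

Definition coop_cost (P U : dist) (v : T) (s : seq (T * T)) : nat :=
  #|[set x | coop_b P U x && (utilized_b s x || (x == v))]|.

Definition two_on (P U : dist) (v : T) (s : seq (T * T)) : Prop :=
  exists D', run (dadd P U) s = Some D' /\ 2 <= D' v.

(* M(v) in nat ∪ {∞}; None stands for ∞. *)
Definition M (P U : dist) (v : T) : option nat :=
  if excluded_middle_informative (kreach (dadd P U) v 2) then
    Some (epsilon (inhabits 0%N)
      (fun m => (exists s, two_on P U v s /\ coop_cost P U v s = m) /\
                forall s, two_on P U v s -> m <= coop_cost P U v s))
  else None.

End Pebbling.

Definition leinf (a b : option nat) : bool :=
  match a, b with
  | _, None => true
  | None, Some _ => false
  | Some m, Some n => m <= n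
  end.

Definition unit_dist (T : finType) (U : T -> nat) (u : T) : Prop :=
  0 < U u /\ forall x, x != u -> U x = 0.

Definition disjoint_dist (T : finType) (P U : T -> nat) : Prop :=
  forall x, P x = 0 \/ U x = 0.

From mathcomp Require Import all_boot ssralg ssrnum ssrint.
From Stdlib Require Import ClassicalEpsilon ClassicalDescription.

Set Implicit Arguments.
Unset Strict Implicit.
Unset Printing Implicit Defensive.

(* A cooperation vertex x next to v forces v to start with at most one pebble
   under P + U: by disjointness two pebbles on v would lie in P or in U alone,
   and one move would then reach x.  Hence a sequence realising M(v) must move
   a pebble onto v from some neighbour w, and its prefix before that move
   already puts two pebbles on w while utilising only vertices the whole
   sequence utilises (w among them); so M(w) <= M(v). *)

Section Pebbling.
Variables (T : finType) (e : rel T).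

Lemma reachable_neighbor (D : T -> nat) (v x : T) :
  e v x -> 2 <= D v -> reachable e D x.
Proof.
move=> evx Dv; exists [:: (v, x)]; eexists; split.
  by rewrite /= /move evx Dv.
by rewrite /= eqxx addn1.
Qed.

Lemma coop_neighbor_lt2 (P U : T -> nat) (v x : T) :
  disjoint_dist P U -> e v x -> coop e P U x -> dadd P U v < 2.
Proof.
move=> disjPU evx [_ [nPx nUx]]; rewrite ltnNge; apply/negP => PUv.
case: (disjPU v) => v0; rewrite /dadd v0 ?add0n ?addn0 in PUv.
- exact: nUx (reachable_neighbor evx PUv).
- exact: nPx (reachable_neighbor evx PUv).
Qed.

Lemma run_first_arrival (D D' : T -> nat) (v : T) s :
  run e D s = Some D' -> D v < D' v ->
  exists s1 w s2 D1, [/\ s = s1 ++ (w, v) :: s2, run e D s1 = Some D1,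
                         e w v & 2 <= D1 w].
Proof.
elim: s D => [|[x y] s IH] D /=; first by case=> <-; rewrite ltnn.
rewrite /move; case: ifP => // /andP [exy Dx] run_s Dv.
have [<-|yv] := eqVneq y v; first by exists [::], x, s, D.
have [|s1 [w [s2 [D1 [-> run_s1 ewv D1w]]]]] := IH _ run_s.
  apply: leq_trans Dv; rewrite (eq_sym v y) (negbTE yv) addn0.
  by case: ifP => _ //; rewrite ltnS leq_subr.
by exists ((x, y) :: s1), w, s2, D1; rewrite /= /move exy Dx.
Qed.

Lemma coop_cost_prefix (P U : T -> nat) (w v : T) s1 s2 :
  coop_cost e P U w s1 <= coop_cost e P U v (s1 ++ (w, v) :: s2).
Proof.
apply/subset_leq_card/subsetP => z; rewrite !inE /utilized_b has_cat /=.
case/andP => -> /orP [-> //|/eqP ->].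
by rewrite eqxx !orbT.
Qed.

Lemma ex_min_value (A : Type) (f : A -> nat) (Q : A -> Prop) :
  (exists a, Q a) ->
  exists m, (exists a, Q a /\ f a = m) /\ forall a, Q a -> m <= f a.
Proof.
case=> a Qa.
pose p m := if excluded_middle_informative (exists a, Q a /\ f a = m)
            then true else false.
have pP m : reflect (exists a, Q a /\ f a = m) (p m).
  by rewrite /p; case: excluded_middle_informative; constructor.
have [|m /pP mQ m_min] := ex_minnP (ex_intro p (f a) _).
  by apply/pP; exists a.
exists m; split=> // b Qb; apply: m_min; apply/pP; by exists b.
Qed.

Lemma M_spec (P U : T -> nat) (v : T) :
  kreach e (dadd P U) v 2 ->
  exists m, M e P U v = Some m /\
    (exists s, two_on e P U v s /\ coop_cost e P U v s = m) /\
    forall s, two_on e P U v s -> m <= coop_cost e P U v s.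
Proof.
case=> s [D' [run_s D'v]].
have ex_two : exists s, two_on e P U v s by exists s, D'.
have := epsilon_spec (inhabits 0) _ (ex_min_value (coop_cost e P U v) ex_two).
set m := epsilon _ _ => m_spec; exists m; split=> //.
by rewrite /M; case: excluded_middle_informative => // -[]; exists s, D'.
Qed.

Lemma M_attained (P U : T -> nat) (v : T) :
  kreach e (dadd P U) v 2 ->
  exists s, two_on e P U v s /\ M e P U v = Some (coop_cost e P U v s).
Proof. by case/M_spec=> m [-> [[s [two_s <-]] _]]; exists s. Qed.

Lemma M_infty (P U : T -> nat) (v : T) :
  ~ kreach e (dadd P U) v 2 -> M e P U v = None.
Proof. by rewrite /M; case: excluded_middle_informative. Qed.

Lemma M_le_cost (P U : T -> nat) (v : T) s n :
  two_on e P U v s -> coop_cost e P U v s <= n -> leinf (M e P U v) (Some n).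
Proof.
move=> two_s cost_n.
have v2 : kreach e (dadd P U) v 2 by case: two_s => D' ?; exists s, D'.
have [m [-> [_ m_min]]] := M_spec v2.
exact: leq_trans (m_min _ two_s) cost_n.
Qed.

End Pebbling.

Theorem claim3p6 (T : finType) (e : rel T)
  (e_sym : symmetric e) (e_irr : irreflexive e)
  (P U : T -> nat) (u : T)
  (hU : unit_dist U u) (hdisj : disjoint_dist P U)
  (v : T)
  (hexc : (3 <= coop_excess e P U v)%R)
  (hnb : exists x, e v x /\ coop e P U x) :
  exists w, e v w /\ leinf (M e P U w) (M e P U v).
Proof.
have [x [evx coop_x]] := hnb.
have PUv := coop_neighbor_lt2 hdisj evx coop_x.
case: (classic (kreach e (dadd P U) v 2)) => [v2|not_v2]; last first.
  by exists x; rewrite (M_infty not_v2); case: (M e P U x).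
have [s [[D' [run_s D'v]] ->]] := M_attained v2.
have [s1 [w [s2 [D1 [-> run_s1 ewv D1w]]]]] :=
  run_first_arrival run_s (leq_trans PUv D'v).
exists w; split; first by rewrite e_sym.
by apply: (M_le_cost (s := s1)); [exists D1 | exact: coop_cost_prefix].
Qed.
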